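(* Fix $q\in[0,1)$ and $N\in\mathbb N$. Let $\boldsymbol\zeta=(\zeta_t)_{t\ge0}$ be the multi-species ASEP on $\mathbb Z$ with $\zeta_0$ the identity; $\boldsymbol\xi=(\xi_t)_{t\ge0}$ the biased card shuffling of size $N$ with $\xi_0$ the identity of $[N]$; $\boldsymbol\lambda=(\lambda_t)_{t\ge0}$ the biased card shuffling of size $N$ started from an arbitrary deterministic $\lambda_0\in S_N$; and $\overline{\boldsymbol\xi}=(\overline\xi_t)_{t\ge0}$ the stationary biased card shuffling of size $N$ ($\overline\xi_0\sim\mathcal M_N$, independent of the Poisson processes), all four coupled under the basic coupling. For $k\in\llbracket0,N\rrbracket$ and $t\ge0$ set $\xi^k_t(x)=\mathbb 1[\xi_t(x)\le k]$, $\lambda^k_t(x)=\mathbb 1[\lambda_t(x)\le k]$, $\overline\xi^k_t(x)=\mathbb 1[\overline\xi_t(x)\le k]$ for $x\in[N]$, and $\zeta^k_t(x)=\mathbb 1[\zeta_t(x)\le k]$ for $x\in\mathbb Z$. Then almost surely, for every $k\in\llbracket0,N\rrbracket$ and $t\ge0$, \[ h\{\xi^k_t\}\le h\{\lambda^k_t\},\qquad h\{\xi^k_t\}\le h\{\zeta^k_t\},\qquad h\{\xi^k_t\}\le h\{\overline\xi^k_t\}, \] where $f\le g$ means $f(x)\le g(x)$ for all $x\in\mathbb Z$.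
   Context: $\llbracket x,y\rrbracket$ is the set of integers in $[x,y]$, $[N]=\llbracket1,N\rrbracket$, $S_N$ the bijections of $[N]$. Mallows measure: $\mathcal M_N(w)\propto q^{\#\{i<j:\,w(i)<w(j)\}}$. Multi-species dynamics on a domain $D$ ($D=\mathbb Z$ or a finite integer interval), state a bijection $\sigma:D\to D$: each nearest-neighbour pair $x,x+1\in D$ swaps its values at rate $1$ if $\sigma(x)<\sigma(x+1)$ and at rate $q$ otherwise; on $D=[N]$ this is the biased card shuffling, on $D=\mathbb Z$ the multi-species ASEP. Basic coupling: take independent Poisson point processes $\Pi_1,\Pi_q$ on $\mathbb Z\times[0,\infty)$ with intensities $1$ and $q$ (times Lebesgue $\times$ counting); at each $(x,s)\in\Pi_1$ with $x,x+1\in D$, swap the values at $x,x+1$ if just before time $s$ the value at $x$ is smaller than at $x+1$; at each $(x,s)\in\Pi_q$ with $x,x+1\in D$, swap if the value at $x$ is larger. All processes are driven by the same $\Pi_1,\Pi_q$. Height function: for $\omega:\mathbb Z\to\{0,1\}$ eventually constant as $x\to-\infty$, $h\{\omega\}:\mathbb Z\to\mathbb Z$ is defined by $h\{\omega\}(x)-h\{\omega\}(x-1)=1-2\omega(x)$, with $h\{\omega\}(x)=x$ for all small $x$ if $\omega=0$ near $-\infty$, and $h\{\omega\}(x)=-x$ for all small $x$ if $\omega=1$ near $-\infty$. For $\omega:\llbracket m,n\rrbracket\to\{0,1\}$, $h\{\omega\}$ is defined by extending $\omega$ by $0$ on $x<m$ and by $1$ on $x>n$. *)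

From Stdlib Require Import ZArith Reals List ClassicalEpsilon.
Open Scope Z_scope.

(** * Clock data (a realization of the Poisson point processes Pi_1, Pi_q).
    [P x s] means that [P] has a point at [(x,s)], i.e. the edge {x,x+1}
    rings at time [s]. *)
Definition clock := Z -> R -> Prop.

Definition rings (P1 Pq : clock) (x : Z) (s : R) : Prop := P1 x s \/ Pq x s.

(** Properties of the realization which hold almost surely for two independent
    Poisson point processes on Z x [0,oo) with intensities 1 and q:
    positive times, local finiteness, all points at distinct times, and
    (Harris) arbitrarily far to the left and to the right there are edges
    without any ring up to any given time T. *)
Definition good_clocks (P1 Pq : clock) : Prop :=
  (forall x s, rings P1 Pq x s -> (0 < s)%R) /\
  (forall x (T : R), exists l : list R,
      forall s, (s <= T)%R -> rings P1 Pq x s -> In s l) /\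
  (forall x y s, rings P1 Pq x s -> rings P1 Pq y s -> x = y) /\
  (forall x s, ~ (P1 x s /\ Pq x s)) /\
  (forall (T : R) n, exists x, n <= x /\
      forall s, (s <= T)%R -> ~ rings P1 Pq x s) /\
  (forall (T : R) n, exists x, x <= n /\
      forall s, (s <= T)%R -> ~ rings P1 Pq x s).

(** Domains: [1,N] (card shuffling) and Z (multi-species ASEP). *)
Definition dom_N (N : nat) : Z -> Prop := fun x => 1 <= x <= Z.of_nat N.
Definition dom_Z : Z -> Prop := fun _ => True.

Definition site_quiet (P1 Pq : clock) (D : Z -> Prop) (x : Z) (I : R -> Prop) : Prop :=
  forall y s, I s -> (y = x - 1 \/ y = x) -> D y -> D (y + 1) -> ~ rings P1 Pq y s.

(** [sigma] is the multi-species dynamics on [D] driven by the clocks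
    (basic coupling), started from [sigma0]: values only change at rings of
    adjacent edges; at a point of [P1] on edge {y,y+1} the values are swapped
    iff (just before) the value at y is smaller than at y+1; at a point of
    [Pq] iff it is larger.  "Just before time s" is expressed through any
    earlier time u such that nothing rings near y, y+1 during (u,s). *)
Definition trajectory (P1 Pq : clock) (D : Z -> Prop) (sigma0 : Z -> Z)
    (sigma : R -> Z -> Z) : Prop :=
  (forall x, D x -> sigma 0%R x = sigma0 x) /\
  (forall x (s t : R), D x -> (0 <= s)%R -> (s <= t)%R ->
      site_quiet P1 Pq D x (fun r => s < r <= t)%R -> sigma t x = sigma s x) /\
  (forall y (s u : R), P1 y s -> D y -> D (y + 1) -> (0 <= u < s)%R ->
      site_quiet P1 Pq D y (fun r => u < r < s)%R ->
      site_quiet P1 Pq D (y + 1) (fun r => u < r < s)%R ->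
      if sigma u y <? sigma u (y + 1)
      then sigma s y = sigma u (y + 1) /\ sigma s (y + 1) = sigma u y
      else sigma s y = sigma u y /\ sigma s (y + 1) = sigma u (y + 1)) /\
  (forall y (s u : R), Pq y s -> D y -> D (y + 1) -> (0 <= u < s)%R ->
      site_quiet P1 Pq D y (fun r => u < r < s)%R ->
      site_quiet P1 Pq D (y + 1) (fun r => u < r < s)%R ->
      if sigma u (y + 1) <? sigma u y
      then sigma s y = sigma u (y + 1) /\ sigma s (y + 1) = sigma u y
      else sigma s y = sigma u y /\ sigma s (y + 1) = sigma u (y + 1)).

(** Elements of S_N (bijections of [N]), as functions Z -> Z restricted to [1,N]. *)
Definition is_perm_N (N : nat) (s : Z -> Z) : Prop :=
  (forall x, dom_N N x -> dom_N N (s x)) /\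
  (forall x y, dom_N N x -> dom_N N y -> s x = s y -> x = y).

Definition occ (k : Z) (sigma : Z -> Z) : Z -> Z :=
  fun x => if sigma x <=? k then 1 else 0.

Definition ext (N : nat) (w : Z -> Z) : Z -> Z :=
  fun x => if x <? 1 then 0 else if Z.of_nat N <? x then 1 else w x.

(** sum_{m < y <= x} f y (0 if x <= m). *)
Definition zsum (f : Z -> Z) (m x : Z) : Z :=
  fold_right Z.add 0
    (map (fun i => f (m + 1 + Z.of_nat i)) (seq 0 (Z.to_nat (x - m)))).

(** Height function computed from a point m at and below which w is constant. *)
Definition height_from (w : Z -> Z) (m : Z) (x : Z) : Z :=
  if w m =? 0 then x - 2 * zsum w m x
  else - x + 2 * zsum (fun y => 1 - w y) m x.

Definition const_left_of (w : Z -> Z) (m : Z) : Prop := forall y, y <= m -> w y = w m.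

(** h{w}: the height function of a 0/1 configuration eventually constant
    near -oo: h(x) - h(x-1) = 1 - 2 w(x), h(x) = x (resp. -x) for all small x
    if w = 0 (resp. 1) near -oo. *)
Definition height (w : Z -> Z) : Z -> Z :=
  height_from w (epsilon (inhabits 0) (const_left_of w)).

(* Projecting onto [1[sigma <= k]] turns each process into a single-species exclusion process
   driven by the same clocks.  A ring at the edge {y, y+1} changes its height function only at
   y, to a value that is monotone in h(y-1), h(y+1) and within one of both; so an ordering of
   height functions survives every ring that moves both processes.  Initially h{xi^k} is the
   wedge max(-x, x-2k) on [0,N], which lies below the height of any permutation.  The ASEP
   also moves where xi is frozen; there one propagates that the wedge stays below h{zeta^k}
   (the wedge has no strict local maximum) and that h{xi^k} lies below the wedge outside
   (0,N).  By the Harris condition everything happens in a window between two edges that do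
   not ring up to time t, where only finitely many rings occur, so the comparison is an
   induction over these ring times. *)

From Stdlib Require Import ZArith Reals List Lia Lra.
From Stdlib Require Import Classical ClassicalEpsilon FunctionalExtensionality.
Open Scope Z_scope.

(** * Height functions *)

Ltac destruct_Z_tests :=
  match goal with
  | |- context [?a =? ?b] => destruct (Z.eqb_spec a b)
  | |- context [?a <? ?b] => destruct (Z.ltb_spec a b)
  | |- context [?a <=? ?b] => destruct (Z.leb_spec a b)
  end.

Lemma Z_ind_from (P : Z -> Prop) (m : Z) :
  P m -> (forall x, m <= x -> P x -> P (x + 1)) -> forall x, m <= x -> P x.
Proof.
  intros H0 HS x Hx.
  replace x with (m + Z.of_nat (Z.to_nat (x - m))) by lia.
  induction (Z.to_nat (x - m)) as [|n IH]; [now rewrite Z.add_0_r|].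
  rewrite Nat2Z.inj_succ, Z.add_succ_r. apply HS; [lia|exact IH].
Qed.

Lemma fold_right_add_acc (l : list Z) a : fold_right Z.add a l = fold_right Z.add 0 l + a.
Proof. induction l; simpl; lia. Qed.

Lemma zsum_succ f m x : m <= x -> zsum f m (x + 1) = zsum f m x + f (x + 1).
Proof.
  intros Hx. unfold zsum.
  replace (Z.to_nat (x + 1 - m)) with (S (Z.to_nat (x - m))) by lia.
  rewrite seq_S, map_app, fold_right_app, fold_right_add_acc. cbn.
  rewrite Z.add_0_r. do 2 f_equal. lia.
Qed.

Lemma zsum_empty f m x : x <= m -> zsum f m x = 0.
Proof. intros Hx. unfold zsum. now replace (Z.to_nat (x - m)) with 0%nat by lia. Qed.

Lemma zsum_ext f g m x : (forall z, m < z <= x -> f z = g z) -> zsum f m x = zsum g m x.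
Proof.
  intros Hfg. unfold zsum. f_equal. apply map_ext_in. intros i Hi.
  apply in_seq in Hi. apply Hfg. lia.
Qed.

Lemma height_from_succ w m x : m <= x ->
  height_from w m (x + 1) = height_from w m x + 1 - 2 * w (x + 1).
Proof. intros Hx. unfold height_from. destruct (w m =? 0); rewrite zsum_succ by lia; lia. Qed.

Lemma height_from_pred w m x : m < x ->
  height_from w m x = height_from w m (x - 1) + 1 - 2 * w x.
Proof.
  intros Hx. replace x with (x - 1 + 1) at 1 3 by lia.
  apply height_from_succ. lia.
Qed.

Lemma height_from_below w m x : x <= m -> height_from w m x = if w m =? 0 then x else - x.
Proof. intros Hx. unfold height_from. rewrite !zsum_empty by lia. destruct (w m =? 0); lia. Qed.

Lemma height_from_ext w w' m x : w m = w' m -> (forall z, m < z <= x -> w z = w' z) ->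
  height_from w m x = height_from w' m x.
Proof.
  intros Hm Hw. unfold height_from. rewrite Hm, (zsum_ext w w' m x Hw).
  now rewrite (zsum_ext (fun y => 1 - w y) (fun y => 1 - w' y) m x)
    by (intros z Hz; now rewrite Hw).
Qed.

Lemma height_from_run w m x0 x c : m <= x0 <= x -> (forall z, x0 < z <= x -> w z = c) ->
  height_from w m x = height_from w m x0 + (x - x0) * (1 - 2 * c).
Proof.
  intros [Hm Hx]. revert x Hx.
  apply (Z_ind_from (fun x => (forall z, x0 < z <= x -> w z = c) ->
    height_from w m x = height_from w m x0 + (x - x0) * (1 - 2 * c))); [intros; lia|].
  intros x Hx IH Hw. rewrite height_from_succ, IH, Hw by (intros; try apply Hw; lia). nia.
Qed.

Lemma height_from_const_left w m p x : const_left_of w p -> 0 <= w p <= 1 -> m <= p -> x <= p ->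
  height_from w m x = if w p =? 0 then x else - x.
Proof.
  intros Hc Hb Hmp Hxp.
  destruct (Z_le_gt_dec x m).
  - rewrite height_from_below, (Hc m) by lia. reflexivity.
  - rewrite (height_from_run w m m x (w p)) by (lia || (intros; apply Hc; lia)).
    rewrite height_from_below, (Hc m) by lia.
    assert (w p = 0 \/ w p = 1) as [-> | ->] by lia; simpl; lia.
Qed.

Lemma height_from_base_change w m p x : const_left_of w p -> 0 <= w p <= 1 -> m <= p ->
  height_from w m x = height_from w p x.
Proof.
  intros Hc Hb Hmp.
  assert (Hle : forall x, x <= p -> height_from w m x = height_from w p x).
  { intros y Hy. now rewrite !(height_from_const_left w _ p y). }
  destruct (Z_le_gt_dec x p) as [Hx|Hx]; [now apply Hle|].
  assert (Hpx : p <= x) by lia. clear Hx. revert x Hpx.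
  apply (Z_ind_from (fun x => height_from w m x = height_from w p x) p);
    [now apply Hle|intros y Hy IH].
  rewrite !height_from_succ, IH by lia. reflexivity.
Qed.

Lemma height_eq_height_from w L : const_left_of w L -> 0 <= w L <= 1 ->
  forall x, height w x = height_from w L x.
Proof.
  intros Hc Hb x. unfold height.
  pose proof (epsilon_spec (inhabits 0) (const_left_of w) (ex_intro _ L Hc)) as Hm.
  set (m := epsilon _ _) in *.
  destruct (Z.le_ge_cases m L).
  - now apply height_from_base_change.
  - symmetry. apply height_from_base_change; auto. now rewrite <- (Hm L).
Qed.

(** * Exclusion steps on 0/1 configurations *)

Definition binary (w : Z -> Z) : Prop := forall z, 0 <= w z <= 1.

Lemma binary_occ k f : binary (occ k f).
Proof. intros z. unfold occ. destruct (f z <=? k); lia. Qed.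

(** For [r = true] a particle (a [1]) jumps from [y] to [y + 1] if it can, for [r = false]
    from [y + 1] to [y]. *)
Definition excl_step (r : bool) (y : Z) (w : Z -> Z) : Z -> Z := fun z =>
  if z =? y then (if r then Z.min else Z.max) (w y) (w (y + 1))
  else if z =? y + 1 then (if r then Z.max else Z.min) (w y) (w (y + 1))
  else w z.

Lemma height_from_two_steps w m y : m < y ->
  height_from w m (y + 1) = height_from w m (y - 1) + 2 - 2 * w y - 2 * w (y + 1).
Proof. intros Hy. rewrite height_from_succ, (height_from_pred w m y) by lia. lia. Qed.

Lemma height_from_excl_step_ne w m r y x : m < y -> x <> y ->
  height_from (excl_step r y w) m x = height_from w m x.
Proof.
  intros Hy Hx.
  assert (Hoff : forall z, z <> y -> z <> y + 1 -> excl_step r y w z = w z).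
  { intros z Hzy Hzy1. unfold excl_step.
    now rewrite (proj2 (Z.eqb_neq z y) Hzy), (proj2 (Z.eqb_neq z (y + 1)) Hzy1). }
  destruct (Z_lt_ge_dec x y) as [Hlt|Hge].
  - apply height_from_ext; [|intros z Hz]; apply Hoff; lia.
  - assert (Hy1 : y + 1 <= x) by lia. clear Hx Hge. revert x Hy1.
    apply (Z_ind_from (fun x => height_from (excl_step r y w) m x = height_from w m x)).
    + rewrite !height_from_two_steps by lia.
      rewrite (height_from_ext (excl_step r y w) w m (y - 1)) by (intros; apply Hoff; lia).
      unfold excl_step. rewrite Z.eqb_refl, (proj2 (Z.eqb_neq (y + 1) y) ltac:(lia)), Z.eqb_refl.
      destruct r; lia.
    + intros x Hx IH. rewrite !height_from_succ, IH, Hoff by lia. reflexivity.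
Qed.

Lemma height_from_excl_step_at w m r y : m < y ->
  height_from (excl_step r y w) m y
  = height_from w m (y - 1) + 1 - 2 * (if r then Z.min else Z.max) (w y) (w (y + 1)).
Proof.
  intros Hy. rewrite height_from_pred, height_from_excl_step_ne by lia.
  unfold excl_step. now rewrite Z.eqb_refl.
Qed.

Lemma excl_step_height_mono w1 w2 m r y : binary w1 -> binary w2 -> m < y ->
  height_from w1 m (y - 1) <= height_from w2 m (y - 1) ->
  height_from w1 m (y + 1) <= height_from w2 m (y + 1) ->
  height_from (excl_step r y w1) m y <= height_from (excl_step r y w2) m y.
Proof.
  intros B1 B2 Hy Hl Hr. rewrite !height_from_excl_step_at by exact Hy.
  rewrite !height_from_two_steps in Hr by exact Hy.
  pose proof (B1 y). pose proof (B1 (y + 1)). pose proof (B2 y). pose proof (B2 (y + 1)).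
  destruct r; lia.
Qed.

Lemma excl_step_height_lower w m r y : binary w -> m < y ->
  height_from w m (y - 1) - 1 <= height_from (excl_step r y w) m y /\
  height_from w m (y + 1) - 1 <= height_from (excl_step r y w) m y.
Proof.
  intros B Hy. rewrite height_from_excl_step_at, height_from_two_steps by exact Hy.
  pose proof (B y). pose proof (B (y + 1)). destruct r; lia.
Qed.

Definition clamp (a b u v : Z) (w : Z -> Z) : Z -> Z :=
  fun z => if z <? a then u else if b <? z then v else w z.

Lemma ext_clamp N w : ext N w = clamp 1 (Z.of_nat N) 0 1 w.
Proof. reflexivity. Qed.

Lemma binary_clamp a b u v w : 0 <= u <= 1 -> 0 <= v <= 1 -> binary w -> binary (clamp a b u v w).
Proof. intros Hu Hv Hw z. unfold clamp. destruct (z <? a); [lia|]. destruct (b <? z); auto. Qed.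

Lemma clamp_excl_step a b u v r y w : a <= y < b ->
  clamp a b u v (excl_step r y w) = excl_step r y (clamp a b u v w).
Proof.
  intros Hy. apply functional_extensionality. intros z. unfold clamp, excl_step.
  repeat destruct_Z_tests; reflexivity || lia.
Qed.

Definition wedge (k x : Z) : Z := Z.max (- x) (x - 2 * k).

Lemma ext_left N w z : z <= 0 -> ext N w z = 0.
Proof. intros Hz. unfold ext. destruct_Z_tests; lia. Qed.

Lemma ext_right N w z : Z.of_nat N < z -> ext N w z = 1.
Proof. intros Hz. unfold ext. repeat destruct_Z_tests; lia. Qed.

Lemma height_from_ext_nonpos N w m x : m <= x <= 0 -> height_from (ext N w) m x = x.
Proof.
  intros Hx. rewrite (height_from_run _ m m x 0) by (lia || (intros; apply ext_left; lia)).
  rewrite height_from_below, ext_left by lia. simpl. lia.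
Qed.

Lemma height_from_ext_beyond N w m x : m <= Z.of_nat N <= x ->
  height_from (ext N w) m x = height_from (ext N w) m (Z.of_nat N) - (x - Z.of_nat N).
Proof.
  intros Hx.
  rewrite (height_from_run _ m (Z.of_nat N) x 1) by (lia || (intros; apply ext_right; lia)).
  lia.
Qed.

Lemma ext_height_le_wedge N k w m x : m <= 0 ->
  height_from (ext N w) m (Z.of_nat N) = Z.of_nat N - 2 * k ->
  m <= x -> x <= 0 \/ Z.of_nat N <= x -> height_from (ext N w) m x <= wedge k x.
Proof.
  intros Hm HN Hx [Hx0|HxN]; unfold wedge.
  - rewrite height_from_ext_nonpos by lia. lia.
  - rewrite height_from_ext_beyond, HN by lia. lia.
Qed.

Lemma sorted_height_from N k s m x : (forall z, dom_N N z -> s z = z) ->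
  0 <= k <= Z.of_nat N -> m <= 0 -> 0 <= x <= Z.of_nat N ->
  height_from (ext N (occ k s)) m x = wedge k x.
Proof.
  intros Hs Hk Hm Hx. unfold wedge.
  assert (Hw : forall z, 0 < z <= Z.of_nat N -> ext N (occ k s) z = if z <=? k then 1 else 0).
  { intros z Hz. unfold ext, occ. rewrite Hs by (unfold dom_N; lia). repeat destruct_Z_tests; lia. }
  assert (Hones : forall y, 0 <= y <= k -> height_from (ext N (occ k s)) m y = - y).
  { intros y Hy. rewrite (height_from_run _ m 0 y 1), height_from_ext_nonpos; [lia|lia|lia|].
    intros z Hz. rewrite Hw by lia. destruct_Z_tests; lia. }
  destruct (Z_le_gt_dec x k); [rewrite Hones by lia; lia|].
  rewrite (height_from_run _ m k x 0), Hones; [lia|lia|lia|].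
  intros z Hz. rewrite Hw by lia. destruct_Z_tests; lia.
Qed.

Lemma perm_height_ge_wedge N k s x : is_perm_N N s -> 0 <= k -> 0 <= x <= Z.of_nat N ->
  wedge k x <= height_from (ext N (occ k s)) 0 x.
Proof.
  intros [Hdom Hinj] Hk Hx.
  set (p := fun z => s z <=? k).
  set (l := map (fun i => 1 + Z.of_nat i) (seq 0 (Z.to_nat x))).
  assert (Hl : forall z, In z l -> 1 <= z <= x).
  { intros z Hz. apply in_map_iff in Hz as (i & <- & Hi). apply in_seq in Hi. lia. }
  assert (Hh : height_from (ext N (occ k s)) 0 x = x - 2 * Z.of_nat (length (filter p l))).
  { unfold height_from. change (ext N (occ k s) 0 =? 0) with true. cbv iota.
    rewrite (zsum_ext _ (occ k s)) by (intros z Hz; unfold ext; repeat destruct_Z_tests; lia).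
    do 2 f_equal. unfold zsum, l. rewrite Z.sub_0_r. clear Hl l.
    induction (seq 0 (Z.to_nat x)) as [|i is IH]; [reflexivity|].
    cbn [map filter fold_right]. replace (0 + 1 + Z.of_nat i) with (1 + Z.of_nat i) by lia.
    unfold occ at 1. change (s (1 + Z.of_nat i) <=? k) with (p (1 + Z.of_nat i)).
    destruct (p (1 + Z.of_nat i)); cbn [length]; rewrite ?Nat2Z.inj_succ; lia. }
  assert (Hnodup : NoDup (map s (filter p l))).
  { apply NoDup_map_NoDup_ForallPairs.
    - intros z1 z2 H1 H2. apply filter_In in H1 as [H1 _], H2 as [H2 _].
      apply Hl in H1, H2. apply Hinj; unfold dom_N; lia.
    - apply NoDup_filter, NoDup_map_NoDup_ForallPairs; [intros i j _ _; lia|apply seq_NoDup]. }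
  assert (Hincl : incl (map s (filter p l)) (map (fun i => 1 + Z.of_nat i) (seq 0 (Z.to_nat k)))).
  { intros v Hv. apply in_map_iff in Hv as (z & <- & Hz). apply filter_In in Hz as [Hz Hp].
    apply Hl in Hz. assert (Hsz : dom_N N (s z)) by (apply Hdom; unfold dom_N; lia).
    unfold p in Hp. apply Z.leb_le in Hp. unfold dom_N in Hsz.
    apply in_map_iff. exists (Z.to_nat (s z - 1)). split; [lia|]. apply in_seq. lia. }
  pose proof (NoDup_incl_length Hnodup Hincl) as Hle_k.
  pose proof (filter_length_le p l) as Hle_x.
  assert (Hlen : length l = Z.to_nat x) by (unfold l; now rewrite length_map, length_seq).
  rewrite !length_map, length_seq in Hle_k.
  rewrite Hh. unfold wedge. lia.
Qed.

Definition height_order (N : nat) (k m b : Z) (w1 w2 : Z -> Z) : Prop :=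
  height_from (ext N w1) m (Z.of_nat N) = Z.of_nat N - 2 * k /\
  forall x, m <= x <= b ->
    height_from (ext N w1) m x <= height_from w2 m x /\ wedge k x <= height_from w2 m x.

Lemma height_order_sorted N k m b s w : (forall z, dom_N N z -> s z = z) ->
  0 <= k <= Z.of_nat N -> m <= 0 -> Z.of_nat N <= b ->
  (forall x, m <= x <= b -> wedge k x <= height_from w m x) ->
  height_order N k m b (occ k s) w.
Proof.
  intros Hs Hk Hm Hb Hw.
  assert (HN : height_from (ext N (occ k s)) m (Z.of_nat N) = Z.of_nat N - 2 * k)
    by (rewrite sorted_height_from by (auto; lia); unfold wedge; lia).
  split; [exact HN|]. intros x Hx. split; [|apply Hw, Hx].
  eapply Z.le_trans; [|apply Hw, Hx].
  destruct (classic (0 < x < Z.of_nat N)) as [Hmid|Hout].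
  - rewrite sorted_height_from by (auto; lia). lia.
  - apply ext_height_le_wedge; [lia|exact HN|lia|lia].
Qed.

(** The wedge has no strict local maximum, while a step at [y] moves [h y] to within one of
    both [h (y - 1)] and [h (y + 1)]. *)
Lemma wedge_le_excl_step k m b r y w : binary w -> m < y < b ->
  (forall x, m <= x <= b -> wedge k x <= height_from w m x) ->
  wedge k y <= height_from (excl_step r y w) m y.
Proof.
  intros Bw Hy Hw.
  destruct (excl_step_height_lower w m r y Bw) as [Hl Hr]; [lia|].
  pose proof (Hw (y - 1) ltac:(lia)). pose proof (Hw (y + 1) ltac:(lia)).
  unfold wedge in *. lia.
Qed.

Lemma height_order_step_both N k m b r y w1 w2 : binary w1 -> binary w2 ->
  m < y < b -> 1 <= y < Z.of_nat N -> height_order N k m b w1 w2 ->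
  height_order N k m b (excl_step r y w1) (excl_step r y w2).
Proof.
  intros B1 B2 Hy HyN [HN Hord].
  assert (E : ext N (excl_step r y w1) = excl_step r y (ext N w1))
    by (rewrite !ext_clamp; apply clamp_excl_step; lia).
  unfold height_order. rewrite E. split; [rewrite height_from_excl_step_ne by lia; exact HN|].
  intros x Hx. destruct (Z.eq_dec x y) as [->|Hxy].
  - split; [|apply (wedge_le_excl_step k m b); auto; intros; apply Hord; lia].
    apply excl_step_height_mono; [apply binary_clamp; auto; lia|exact B2|lia|apply Hord; lia..].
  - rewrite !height_from_excl_step_ne by lia. apply Hord, Hx.
Qed.

Lemma height_order_step_right N k m b r y w1 w2 : binary w2 -> m <= 0 ->
  m < y < b -> y <= 0 \/ Z.of_nat N <= y -> height_order N k m b w1 w2 ->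
  height_order N k m b w1 (excl_step r y w2).
Proof.
  intros B2 Hm Hy Hout [HN Hord]. split; [exact HN|].
  assert (Hwedge : wedge k y <= height_from (excl_step r y w2) m y)
    by (apply (wedge_le_excl_step k m b); auto; intros; apply Hord; lia).
  intros x Hx. destruct (Z.eq_dec x y) as [->|Hxy].
  - split; [|exact Hwedge]. eapply Z.le_trans; [|exact Hwedge].
    apply ext_height_le_wedge; [lia|exact HN|lia|exact Hout].
  - rewrite height_from_excl_step_ne by lia. apply Hord, Hx.
Qed.

(** * The multi-species update and its projections *)

Definition swap_at (f : Z -> Z) (y : Z) : Z -> Z :=
  fun z => if z =? y then f (y + 1) else if z =? y + 1 then f y else f z.

(** [r = true] stands for a point of [P1], [r = false] for a point of [Pq]. *)
Definition update (r : bool) (f : Z -> Z) (y : Z) : Z -> Z :=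
  if (if r then f y <? f (y + 1) else f (y + 1) <? f y) then swap_at f y else f.

Lemma update_other r f y z : z <> y -> z <> y + 1 -> update r f y z = f z.
Proof.
  intros Hy Hy1. unfold update, swap_at.
  destruct (if r then _ else _); [|reflexivity].
  now rewrite (proj2 (Z.eqb_neq z y) Hy), (proj2 (Z.eqb_neq z (y + 1)) Hy1).
Qed.

Lemma update_range r f y z :
  update r f y z = f z \/ update r f y z = f y \/ update r f y z = f (y + 1).
Proof.
  unfold update, swap_at. destruct (if r then _ else _); [|now left].
  repeat destruct_Z_tests; tauto.
Qed.

Lemma update_of_rule (r : bool) (f g : Z -> Z) y :
  (if (if r then f y <? f (y + 1) else f (y + 1) <? f y)
   then g y = f (y + 1) /\ g (y + 1) = f y
   else g y = f y /\ g (y + 1) = f (y + 1)) ->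
  g y = update r f y y /\ g (y + 1) = update r f y (y + 1).
Proof.
  unfold update, swap_at. destruct (if r then _ else _); [|easy].
  rewrite Z.eqb_refl, (proj2 (Z.eqb_neq (y + 1) y) ltac:(lia)), Z.eqb_refl. easy.
Qed.

Lemma occ_update k r f y : occ k (update r f y) = excl_step r y (occ k f).
Proof.
  apply functional_extensionality. intros z. unfold excl_step.
  destruct (Z.eqb_spec z y) as [->|Hy]; [|destruct (Z.eqb_spec z (y + 1)) as [->|Hy1]].
  1,2: unfold occ, update, swap_at; destruct r; repeat destruct_Z_tests; lia.
  - unfold occ. now rewrite update_other.
Qed.

Definition active (D : Z -> Prop) (y : Z) : Prop := D y /\ D (y + 1).

Definition window_agree (D : Z -> Prop) (a b : Z) (f g : Z -> Z) : Prop :=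
  forall z, a <= z <= b -> D z -> f z = g z.

Definition window_step (D : Z -> Prop) (a b : Z) (r : bool) (y : Z) (f g : Z -> Z) : Prop :=
  (active D y -> forall z, a <= z <= b -> D z -> g z = update r f y z) /\
  (~ active D y -> window_agree D a b f g).

Lemma clamp_occ_congr a b u v k f g : (forall z, a <= z <= b -> f z = g z) ->
  clamp a b u v (occ k f) = clamp a b u v (occ k g).
Proof.
  intros Hfg. apply functional_extensionality. intros z. unfold clamp, occ.
  repeat destruct_Z_tests; try reflexivity; rewrite Hfg in *; lia.
Qed.

Lemma clamp_occ_step D a b c d u v k r y f g :
  (forall z, c <= z <= d -> a <= z <= b /\ D z) -> c <= y < d ->
  window_step D a b r y f g ->
  clamp c d u v (occ k g) = clamp c d u v (excl_step r y (occ k f)).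
Proof.
  intros Hin Hy [Hact _].
  assert (HA : active D y) by (split; apply Hin; lia).
  rewrite <- occ_update. apply clamp_occ_congr.
  intros z Hz. apply Hact; [exact HA|apply Hin; lia..].
Qed.

Lemma clamp_occ_frozen D a b c d u v k r y f g :
  (forall z, c <= z <= d -> a <= z <= b /\ D z) -> ~ active D y ->
  window_step D a b r y f g -> clamp c d u v (occ k g) = clamp c d u v (occ k f).
Proof.
  intros Hin Hna [_ Hfro]. apply clamp_occ_congr. intros z Hz.
  symmetry. apply Hfro; [exact Hna|apply Hin; lia..].
Qed.

Lemma clamp_occ_agree D a b c d u v k f g :
  (forall z, c <= z <= d -> a <= z <= b /\ D z) -> window_agree D a b f g ->
  clamp c d u v (occ k f) = clamp c d u v (occ k g).
Proof. intros Hin Hfg. apply clamp_occ_congr. intros z Hz. apply Hfg; apply Hin; lia. Qed.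

(** * Coupled induction over ring times *)

Lemma exists_last_below (l : list R) (t : R) : (0 <= t)%R ->
  exists s, (0 <= s <= t)%R /\ (s = 0%R \/ In s l) /\ forall r, In r l -> ~ (s < r <= t)%R.
Proof.
  intros Ht. induction l as [|r l (s & Hs & Hsl & Hgap)].
  - exists 0%R. split; [lra|]. split; [now left|]. intros r [].
  - destruct (classic (s < r <= t)%R) as [Hr|Hr].
    + exists r. split; [lra|]. split; [right; now left|].
      intros r' [<-|Hr']; [lra|]. specialize (Hgap r' Hr'). lra.
    + exists s. split; [exact Hs|]. split; [destruct Hsl; [now left|right; now right]|].
      intros r' [<-|Hr']; [exact Hr|auto].
Qed.

Section Coupling.

Variables P1 Pq : clock.
Hypothesis Hclocks : good_clocks P1 Pq.

Definition window_quiet (a b : Z) (I : R -> Prop) : Prop :=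
  forall y s, a <= y < b -> I s -> ~ rings P1 Pq y s.

Definition window_closed (D : Z -> Prop) (a b : Z) (T : R) : Prop :=
  forall e s, (e = a - 1 \/ e = b) -> active D e -> (s <= T)%R -> ~ rings P1 Pq e s.

Lemma site_quiet_in_window D a b T z (I : R -> Prop) :
  window_closed D a b T -> a <= z <= b -> (forall s, I s -> (s <= T)%R) ->
  (forall e s, a <= e < b -> (e = z - 1 \/ e = z) -> active D e -> I s -> ~ rings P1 Pq e s) ->
  site_quiet P1 Pq D z I.
Proof.
  intros Hcl Hz HI Hin e s Hs He De De1.
  assert (a <= e < b \/ e = a - 1 \/ e = b) as [Hab|Hbd] by lia.
  - now apply Hin; [| | split |].
  - apply (Hcl e s Hbd); [split|]; auto.
Qed.

Lemma trajectory_window_agree D s0 sigma a b T u v :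
  trajectory P1 Pq D s0 sigma -> window_closed D a b T -> (0 <= u <= v)%R -> (v <= T)%R ->
  window_quiet a b (fun s => u < s <= v)%R -> window_agree D a b (sigma u) (sigma v).
Proof.
  intros (_ & Hfrozen & _) Hcl Huv HvT Hq z Hz Dz. symmetry.
  apply Hfrozen; [exact Dz|lra|lra|].
  apply (site_quiet_in_window D a b T); [exact Hcl|exact Hz|intros; lra|].
  intros e s He _ _. now apply Hq.
Qed.

Lemma trajectory_window_step D s0 sigma a b T (r : bool) y u s :
  trajectory P1 Pq D s0 sigma -> window_closed D a b T -> a <= y < b ->
  (if r then P1 y s else Pq y s) -> (0 <= u < s)%R -> (s <= T)%R ->
  window_quiet a b (fun v => u < v < s)%R -> window_step D a b r y (sigma u) (sigma s).
Proof.
  destruct Hclocks as (_ & _ & Hdistinct & _).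
  intros (_ & Hfrozen & HP1 & HPq) Hcl Hy Hr Hus HsT Hq.
  assert (Hring : rings P1 Pq y s) by (destruct r; [left|right]; exact Hr).
  assert (Hkeep : forall z, a <= z <= b -> D z -> (active D y -> z <> y /\ z <> y + 1) ->
    sigma s z = sigma u z).
  { intros z Hz Dz Hzy. apply Hfrozen; [exact Dz|lra|lra|].
    apply (site_quiet_in_window D a b T); [exact Hcl|exact Hz|intros; lra|].
    intros e v He Hez Hae Hv Hev. destruct (Rlt_le_dec v s).
    - apply (Hq e v He); [lra|exact Hev].
    - assert (v = s) as -> by lra.
      rewrite (Hdistinct e y s Hev Hring) in Hez, Hae. specialize (Hzy Hae). lia. }
  split.
  - intros [Dy Dy1] z Hz Dz.
    assert (Hnear : forall x, y <= x <= y + 1 -> site_quiet P1 Pq D x (fun v => u < v < s)%R).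
    { intros x Hx. apply (site_quiet_in_window D a b T); [exact Hcl|lia|intros; lra|].
      intros e v He _ _. now apply Hq. }
    assert (Hpair : sigma s y = update r (sigma u) y y /\
                    sigma s (y + 1) = update r (sigma u) y (y + 1)).
    { apply update_of_rule.
      destruct r; [apply HP1|apply HPq]; auto; apply Hnear; lia. }
    destruct (Z.eq_dec z y) as [->|Hzy]; [apply Hpair|].
    destruct (Z.eq_dec z (y + 1)) as [->|Hzy1]; [apply Hpair|].
    rewrite update_other by assumption. apply Hkeep; auto.
  - intros Hna z Hz Dz. symmetry. apply Hkeep; tauto.
Qed.

Lemma window_rings_finite a b T :
  exists l, forall y s, a <= y < b -> (s <= T)%R -> rings P1 Pq y s -> In s l.
Proof.
  destruct Hclocks as (_ & Hfin & _).
  enough (H : forall n : nat, exists l, forall y s,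
             a <= y < a + Z.of_nat n -> (s <= T)%R -> rings P1 Pq y s -> In s l).
  { destruct (H (Z.to_nat (b - a))) as [l Hl]. exists l. intros y s Hy. apply Hl. lia. }
  induction n as [|n [l IH]]; [exists nil; lia|].
  destruct (Hfin (a + Z.of_nat n) T) as [l' Hl'].
  exists (l ++ l'). intros y s Hy Hs Hr. apply in_or_app.
  destruct (Z.eq_dec y (a + Z.of_nat n)) as [->|Hne]; [right; auto|left].
  apply (IH y); [lia|exact Hs|exact Hr].
Qed.

Section Pair_induction.

Variables (D1 D2 : Z -> Prop) (s01 s02 : Z -> Z) (sigma1 sigma2 : R -> Z -> Z) (a b : Z) (T : R).
Variable Inv : (Z -> Z) -> (Z -> Z) -> Prop.
Hypothesis Htraj1 : trajectory P1 Pq D1 s01 sigma1.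
Hypothesis Htraj2 : trajectory P1 Pq D2 s02 sigma2.
Hypothesis Hclosed1 : window_closed D1 a b T.
Hypothesis Hclosed2 : window_closed D2 a b T.
Hypothesis Hinv_agree : forall f1 f2 g1 g2,
  window_agree D1 a b f1 g1 -> window_agree D2 a b f2 g2 -> Inv f1 f2 -> Inv g1 g2.
Hypothesis Hinv_step : forall r y f1 f2 g1 g2, a <= y < b ->
  window_step D1 a b r y f1 g1 -> window_step D2 a b r y f2 g2 -> Inv f1 f2 -> Inv g1 g2.

Lemma pair_inv_quiet u v : (0 <= u <= v)%R -> (v <= T)%R ->
  window_quiet a b (fun s => u < s <= v)%R ->
  Inv (sigma1 u) (sigma2 u) -> Inv (sigma1 v) (sigma2 v).
Proof. intros Huv HvT Hq. apply Hinv_agree; eapply trajectory_window_agree; eauto. Qed.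

Lemma pair_inv_ring u s : (0 <= u < s)%R -> (s <= T)%R ->
  window_quiet a b (fun v => u < v < s)%R ->
  Inv (sigma1 u) (sigma2 u) -> Inv (sigma1 s) (sigma2 s).
Proof.
  intros Hus HsT Hq Hu.
  destruct (classic (exists y, a <= y < b /\ rings P1 Pq y s)) as [(y & Hy & Hr)|Hnone].
  - assert (exists r : bool, if r then P1 y s else Pq y s) as [r Hr']
      by (destruct Hr; [exists true|exists false]; assumption).
    apply (Hinv_step r y (sigma1 u) (sigma2 u)); auto; eapply trajectory_window_step; eauto.
  - apply (pair_inv_quiet u s); [lra|lra| |exact Hu].
    intros y v Hy Hv Hyv. destruct (Req_dec v s) as [->|Hvs]; [eauto|].
    apply (Hq y v Hy); [lra|exact Hyv].
Qed.

(** Induction on the number of ring times in the window up to [t]: the last one [s] is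
    reached from the one before it. *)
Theorem trajectory_pair_ind :
  Inv (sigma1 0%R) (sigma2 0%R) -> forall t, (0 <= t <= T)%R -> Inv (sigma1 t) (sigma2 t).
Proof.
  intros H0.
  destruct (window_rings_finite a b T) as [l0 Hl0].
  enough (Hind : forall n l t, (length l < n)%nat -> (0 <= t <= T)%R ->
    (forall y s, a <= y < b -> (0 < s <= t)%R -> rings P1 Pq y s -> In s l) ->
    Inv (sigma1 t) (sigma2 t)).
  { intros t Ht. apply (Hind (S (length l0)) l0); [lia|exact Ht|].
    intros y s Hy Hs. apply Hl0; [exact Hy|lra]. }
  induction n as [|n IH]; intros l t Hlen Ht Hcov; [lia|].
  destruct (exists_last_below l t) as (s & Hs & Hsl & Hgap); [lra|].
  apply (pair_inv_quiet s t); [lra|lra| |].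
  { intros y v Hy Hv Hyv. apply (Hgap v); [apply (Hcov y); auto; lra|exact Hv]. }
  destruct (Req_dec s 0) as [->|Hs0]; [exact H0|].
  destruct Hsl as [|Hsl]; [contradiction|].
  set (l' := remove Req_dec_T s l).
  destruct (exists_last_below l' s) as (u & Hu & Hul & Hgap'); [lra|].
  assert (Hus : (u < s)%R).
  { destruct Hul as [->|Hul]; [lra|].
    destruct (Req_dec u s) as [->|]; [now apply remove_In in Hul|lra]. }
  apply (pair_inv_ring u s); [lra|lra| |].
  - intros y v Hy Hv Hyv. apply (Hgap' v); [|lra].
    apply in_in_remove; [lra|apply (Hcov y); auto; lra].
  - apply (IH l'); [pose proof (remove_length_lt Req_dec_T l s Hsl); unfold l'; lia|lra|].
    intros y v Hy Hv Hyv. apply in_in_remove; [lra|apply (Hcov y); auto; lra].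
Qed.

End Pair_induction.

Lemma trajectory_window_values D s0 sigma a b T (P : Z -> Prop) :
  trajectory P1 Pq D s0 sigma -> window_closed D a b T ->
  (forall z, a <= z <= b -> D z -> P (sigma 0%R z)) ->
  forall t, (0 <= t <= T)%R -> forall z, a <= z <= b -> D z -> P (sigma t z).
Proof.
  intros Tr Hcl H0 t Ht.
  apply (trajectory_pair_ind D D s0 s0 sigma sigma a b T
           (fun f _ => forall z, a <= z <= b -> D z -> P (f z))); auto.
  - intros f1 f2 g1 g2 A1 _ Hf z Hz Dz. rewrite <- A1 by assumption. auto.
  - intros r y f1 f2 g1 g2 Hy [Hact Hfro] _ Hf z Hz Dz.
    destruct (classic (active D y)) as [[Dy Dy1]|Hna].
    + rewrite (Hact (conj Dy Dy1) z Hz Dz).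
      destruct (update_range r f1 y z) as [->|[->| ->]]; apply Hf; auto; lia.
    + rewrite <- (Hfro Hna z Hz Dz). auto.
Qed.

Lemma window_closed_dom_N N m b T : m <= 0 -> Z.of_nat N <= b ->
  window_closed (dom_N N) (m + 1) b T.
Proof. intros Hm Hb e s He [De De1]. unfold dom_N in *. lia. Qed.

Lemma shuffle_height_below N k D s0 xi sigma m b u v T :
  trajectory P1 Pq (dom_N N) (fun x => x) xi -> trajectory P1 Pq D s0 sigma ->
  window_closed D (m + 1) b T -> m <= 0 -> Z.of_nat N <= b ->
  (forall z, m + 1 <= z <= b -> D z) -> 0 <= u <= 1 -> 0 <= v <= 1 -> 0 <= k <= Z.of_nat N ->
  (forall x, m <= x <= b ->
     wedge k x <= height_from (clamp (m + 1) b u v (occ k (sigma 0%R))) m x) ->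
  forall t, (0 <= t <= T)%R -> forall x, m <= x <= b ->
  height_from (ext N (occ k (xi t))) m x <= height_from (clamp (m + 1) b u v (occ k (sigma t))) m x.
Proof.
  intros Txi Ts Hcl Hm Hb HD Hu Hv Hk H0 t Ht x Hx.
  assert (Hin1 : forall z, 1 <= z <= Z.of_nat N -> m + 1 <= z <= b /\ dom_N N z)
    by (unfold dom_N; split; lia).
  assert (Hin2 : forall z, m + 1 <= z <= b -> m + 1 <= z <= b /\ D z) by (split; auto).
  enough (HI : height_order N k m b (occ k (xi t)) (clamp (m + 1) b u v (occ k (sigma t))))
    by (apply HI, Hx).
  revert t Ht. apply (trajectory_pair_ind (dom_N N) D (fun x => x) s0 xi sigma (m + 1) b T
    (fun f1 f2 => height_order N k m b (occ k f1) (clamp (m + 1) b u v (occ k f2)))); auto.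
  - apply window_closed_dom_N; lia.
  - intros f1 f2 g1 g2 A1 A2.
    rewrite (clamp_occ_agree _ _ _ _ _ _ _ _ f2 g2 Hin2 A2).
    unfold height_order. rewrite ext_clamp, (clamp_occ_agree _ _ _ _ _ _ _ _ f1 g1 Hin1 A1). easy.
  - intros r y f1 f2 g1 g2 Hy S1 S2 Hord.
    rewrite (clamp_occ_step _ _ _ _ _ _ _ _ _ _ _ _ Hin2 Hy S2), clamp_excl_step by lia.
    assert (B2 : binary (clamp (m + 1) b u v (occ k f2))) by (apply binary_clamp, binary_occ; lia).
    destruct (classic (active (dom_N N) y)) as [Hact|Hna].
    + assert (Hy1 : 1 <= y < Z.of_nat N) by (unfold active, dom_N in Hact; lia).
      unfold height_order.
      rewrite ext_clamp, (clamp_occ_step _ _ _ _ _ _ _ _ _ _ _ _ Hin1 Hy1 S1), <- ext_clamp.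
      apply height_order_step_both; auto; [apply binary_occ|lia].
    + unfold height_order.
      rewrite ext_clamp, (clamp_occ_frozen _ _ _ _ _ _ _ _ _ _ _ _ Hin1 Hna S1), <- ext_clamp.
      apply height_order_step_right; auto; [lia|unfold active, dom_N in Hna; lia].
  - apply height_order_sorted; auto. apply Txi.
Qed.

Lemma height_ext N w m x : m <= 0 -> height (ext N w) x = height_from (ext N w) m x.
Proof.
  intros Hm. apply height_eq_height_from; [|rewrite ext_left by lia; lia].
  intros y Hy. rewrite !ext_left by lia. reflexivity.
Qed.

Lemma shuffle_height_le N k xi lam lam0 t :
  is_perm_N N lam0 ->
  trajectory P1 Pq (dom_N N) (fun x => x) xi -> trajectory P1 Pq (dom_N N) lam0 lam ->
  0 <= k <= Z.of_nat N -> (0 <= t)%R ->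
  forall x, height (ext N (occ k (xi t))) x <= height (ext N (occ k (lam t))) x.
Proof.
  intros Hperm Txi Tlam Hk Ht x.
  rewrite !(height_ext N _ 0 x) by lia.
  assert (Hwin : forall x, 0 <= x <= Z.of_nat N ->
    height_from (ext N (occ k (xi t))) 0 x <= height_from (ext N (occ k (lam t))) 0 x).
  { intros y Hy.
    apply (shuffle_height_below N k (dom_N N) lam0 xi lam 0 (Z.of_nat N) 0 1 t);
      auto; try lia; [apply window_closed_dom_N; lia| |lra].
    intros z Hz. destruct Tlam as [Hlam0 _].
    change (clamp (0 + 1) (Z.of_nat N) 0 1 (occ k (lam 0%R))) with (ext N (occ k (lam 0%R))).
    rewrite ext_clamp, (clamp_occ_congr _ _ _ _ k _ lam0), <- ext_clamp
      by (intros; apply Hlam0; unfold dom_N; lia).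
    apply perm_height_ge_wedge; auto; lia. }
  destruct (Z_lt_le_dec x 0) as [Hneg|Hnneg].
  - rewrite !height_from_below, !ext_left by lia. reflexivity.
  - destruct (Z_le_gt_dec x (Z.of_nat N)); [now apply Hwin|].
    rewrite !(height_from_ext_beyond N _ 0 x) by lia.
    specialize (Hwin (Z.of_nat N)). lia.
Qed.

Lemma asep_values_left zeta t L :
  trajectory P1 Pq dom_Z (fun x => x) zeta -> (0 <= t)%R ->
  (forall s, (s <= t)%R -> ~ rings P1 Pq L s) -> forall y, y <= L -> zeta t y <= L.
Proof.
  intros Tz Ht HL y Hy.
  destruct Hclocks as (_ & _ & _ & _ & _ & Hleft).
  destruct (Hleft t (y - 1)) as (L' & HL' & QL').
  apply (trajectory_window_values dom_Z (fun x => x) zeta (L' + 1) L t (fun v => v <= L));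
    [exact Tz| | |lra|lia|exact I].
  - intros e s [He|He] _ Hs; subst e; [replace (L' + 1 - 1) with L' by lia|]; auto.
  - intros z Hz _. destruct Tz as [Hz0 _]. rewrite Hz0 by exact I. lia.
Qed.

Lemma asep_identity_height_from k L U x : L <= 0 <= k -> k <= U -> L <= x <= U ->
  height_from (clamp (L + 1) U 1 0 (occ k (fun z => z))) L x = wedge k x.
Proof.
  intros HL HU Hx. unfold wedge.
  set (w := clamp (L + 1) U 1 0 (occ k (fun z => z))).
  assert (HwL : height_from w L L = - L).
  { rewrite height_from_below by lia.
    replace (w L) with 1 by (unfold w, clamp; destruct_Z_tests; lia). reflexivity. }
  assert (Hones : forall x, L <= x <= k -> height_from w L x = - x).
  { intros y Hy. rewrite (height_from_run w L L y 1), HwL; [lia|lia|].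
    intros z Hz. unfold w, clamp, occ. repeat destruct_Z_tests; lia. }
  destruct (Z_le_gt_dec x k); [rewrite Hones by lia; lia|].
  rewrite (height_from_run w L k x 0), Hones; [lia|lia|lia|].
  intros z Hz. unfold w, clamp, occ. repeat destruct_Z_tests; lia.
Qed.

Lemma asep_height_ge N k xi zeta t :
  trajectory P1 Pq dom_Z (fun x => x) zeta -> trajectory P1 Pq (dom_N N) (fun x => x) xi ->
  0 <= k <= Z.of_nat N -> (0 <= t)%R ->
  forall x, height (ext N (occ k (xi t))) x <= height (occ k (zeta t)) x.
Proof.
  intros Tz Txi Hk Ht x.
  pose proof Hclocks as (_ & _ & _ & _ & Hright & Hleft).
  destruct (Hleft t (Z.min x 0)) as (L & HL & QL).
  destruct (Hright t (Z.max x (Z.of_nat N))) as (U & HU & QU).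
  assert (Hones : forall y, y <= L -> occ k (zeta t) y = 1).
  { intros y Hy. unfold occ. pose proof (asep_values_left zeta t L Tz Ht QL y Hy).
    destruct_Z_tests; lia. }
  rewrite (height_ext N _ L x), (height_eq_height_from _ L) by
    (try (intros y Hy; rewrite !Hones by lia); try rewrite Hones; lia).
  rewrite (height_from_ext (occ k (zeta t)) (clamp (L + 1) U 1 0 (occ k (zeta t)))).
  2: { rewrite Hones by lia. unfold clamp. destruct_Z_tests; lia. }
  2: { intros z Hz. unfold clamp. repeat destruct_Z_tests; lia || reflexivity. }
  apply (shuffle_height_below N k dom_Z (fun x => x) xi zeta L U 1 0 t);
    [exact Txi|exact Tz| |lia|lia|intros; exact I|lia|lia|lia| |lra|lia].
  - intros e s [He|He] _ Hs; subst e; [replace (L + 1 - 1) with L by lia|]; auto.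
  - intros y Hy. destruct Tz as [Hz0 _].
    replace (zeta 0%R) with (fun z : Z => z)
      by (apply functional_extensionality; intros z; now rewrite Hz0).
    rewrite asep_identity_height_from by lia. lia.
Qed.

End Coupling.

Theorem lemma2p2 (q : R) (N : nat) (P1 Pq : clock)
  (zeta xi lam xibar : R -> Z -> Z) (lam0 xibar0 : Z -> Z) :
  (0 <= q < 1)%R ->
  good_clocks P1 Pq ->
  is_perm_N N lam0 ->
  is_perm_N N xibar0 ->
  trajectory P1 Pq dom_Z (fun x => x) zeta ->
  trajectory P1 Pq (dom_N N) (fun x => x) xi ->
  trajectory P1 Pq (dom_N N) lam0 lam ->
  trajectory P1 Pq (dom_N N) xibar0 xibar ->
  forall (k : Z) (t : R), 0 <= k <= Z.of_nat N -> (0 <= t)%R ->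
  forall x : Z,
    height (ext N (occ k (xi t))) x <= height (ext N (occ k (lam t))) x /\
    height (ext N (occ k (xi t))) x <= height (occ k (zeta t)) x /\
    height (ext N (occ k (xi t))) x <= height (ext N (occ k (xibar t))) x.
Proof.
  (* The clocks are given as a realization. *)
  intros _ Hclocks Hlam0 Hxibar0 Tzeta Txi Tlam Txibar k t Hk Ht x.
  split; [|split].
  - exact (shuffle_height_le P1 Pq Hclocks N k xi lam lam0 t Hlam0 Txi Tlam Hk Ht x).
  - exact (asep_height_ge P1 Pq Hclocks N k xi zeta t Tzeta Txi Hk Ht x).
  - exact (shuffle_height_le P1 Pq Hclocks N k xi xibar xibar0 t Hxibar0 Txi Txibar Hk Ht x).
Qed.
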